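(* Let $(X,d,\theta)$ be a $\theta$-metric space with $\theta$ a $B$-action. Then for every $a\in X$ and every $k>0$ there exists $r>0$ such that for all $b\in X$ with $d(a,b)\ge k$ and all $c\in X$, one has $d(a,c)+d(c,b)\ge r$.
   Context: A $B$-action is a map $\theta:[0,\infty)\times[0,\infty)\to[0,\infty)$ that is continuous in each variable separately and satisfies: (i) $\theta(0,0)=0$ and $\theta(s,t)=\theta(t,s)$ for all $s,t\ge0$; (ii) $\theta(x,y)<\theta(s,t)$ whenever either $x\le s,\ y<t$ or $x<s,\ y\le t$; (iii) for each $m\in\mathrm{Im}(\theta)=\{\theta(s,t):s,t\ge0\}$ and each $t\in[0,m]$ there is $s\in[0,m]$ with $\theta(s,t)=m$; (iv) $\theta(s,0)\le s$ for all $s>0$. A $\theta$-metric on a non-empty set $X$ with respect to a $B$-action $\theta$ is a map $d:X\times X\to[0,\infty)$ such that for all $x,y,z\in X$: $d(x,y)=0$ iff $x=y$; $d(x,y)=d(y,x)$; $d(x,z)\le\theta(d(x,y),d(y,z))$. *)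

From Stdlib Require Import Reals.
Open Scope R_scope.

(* A map [0,oo) x [0,oo) -> [0,oo) is modelled as theta : R -> R -> R;
   all conditions only concern nonnegative arguments. *)

Definition cont_nonneg_at (f : R -> R) (x : R) : Prop :=
  forall eps, eps > 0 -> exists delta, delta > 0 /\
    forall y, 0 <= y -> Rabs (y - x) < delta -> Rabs (f y - f x) < eps.

Definition B_action (theta : R -> R -> R) : Prop :=
  (forall s t, 0 <= s -> 0 <= t -> 0 <= theta s t) /\
  (forall t, 0 <= t -> forall s, 0 <= s -> cont_nonneg_at (fun u => theta u t) s) /\
  (forall s, 0 <= s -> forall t, 0 <= t -> cont_nonneg_at (fun u => theta s u) t) /\
  theta 0 0 = 0 /\
  (forall s t, 0 <= s -> 0 <= t -> theta s t = theta t s) /\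
  (forall x y s t, 0 <= x -> 0 <= y -> 0 <= s -> 0 <= t ->
     ((x <= s /\ y < t) \/ (x < s /\ y <= t)) -> theta x y < theta s t) /\
  (forall m, (exists s t, 0 <= s /\ 0 <= t /\ theta s t = m) ->
     forall t, 0 <= t <= m -> exists s, 0 <= s <= m /\ theta s t = m) /\
  (forall s, s > 0 -> theta s 0 <= s).

Definition theta_metric {X : Type} (theta : R -> R -> R) (d : X -> X -> R) : Prop :=
  (forall x y, 0 <= d x y) /\
  (forall x y, d x y = 0 <-> x = y) /\
  (forall x y, d x y = d y x) /\
  (forall x y z, d x z <= theta (d x y) (d y z)).

From Stdlib Require Import Reals Lra.
Open Scope R_scope.

(* Since theta(0,0) = 0 and theta is continuous in each
   variable separately, one can move away from the origin in two steps
   (first along the second variable, then along the first) and find u, v > 0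
   with theta(u,v) < k.  If now d(a,c) + d(c,b) < r := min(u,v), then
   d(a,c) < u and d(c,b) < v, so the theta-triangle inequality together with
   the strict monotonicity (ii) of theta gives
     d(a,b) <= theta(d(a,c), d(c,b)) < theta(u,v) < k.
   Hence d(a,b) >= k forces d(a,c) + d(c,b) >= r. *)

Lemma cont_nonneg_below_right (f : R -> R) (x k : R) :
  0 <= x -> cont_nonneg_at f x -> f x < k -> exists y, x < y /\ f y < k.
Proof.
  intros Hx Hf Hfx.
  destruct (Hf (k - f x)) as [delta [Hdelta Hnear]]; [lra |].
  exists (x + delta / 2); split; [lra |].
  assert (Hclose : Rabs (f (x + delta / 2) - f x) < k - f x).
  { apply Hnear; [lra |].
    replace (x + delta / 2 - x) with (delta / 2) by ring.
    rewrite Rabs_right; lra. }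
  apply Rabs_def2 in Hclose; lra.
Qed.

Lemma B_action_small_box (theta : R -> R -> R) (k : R) :
  B_action theta -> k > 0 -> exists u v, 0 < u /\ 0 < v /\ theta u v < k.
Proof.
  intros [_ [Hcont1 [Hcont2 [H00 _]]]] Hk.
  destruct (cont_nonneg_below_right (fun t => theta 0 t) 0 k (Rle_refl 0)
              (Hcont2 0 (Rle_refl 0) 0 (Rle_refl 0)))
    as [v [Hv Hv_small]]; [simpl; lra |].
  destruct (cont_nonneg_below_right (fun s => theta s v) 0 k (Rle_refl 0)
              (Hcont1 v (Rlt_le _ _ Hv) 0 (Rle_refl 0)) Hv_small)
    as [u [Hu Hu_small]].
  exists u, v; repeat split; assumption.
Qed.

Lemma theta_metric_short_path (X : Type) (theta : R -> R -> R) (d : X -> X -> R)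
  (u v k : R) (a b c : X) :
  B_action theta -> theta_metric theta d -> theta u v < k ->
  d a c < u -> d c b < v -> d a b < k.
Proof.
  intros [_ [_ [_ [_ [_ [Hmono _]]]]]] [Hdpos [_ [_ Htri]]] Huv Hac Hcb.
  assert (Hlt : theta (d a c) (d c b) < theta u v).
  { pose proof (Hdpos a c); pose proof (Hdpos c b).
    apply Hmono; lra. }
  pose proof (Htri a c b); lra.
Qed.

Theorem mainTheorem9 (X : Type) (theta : R -> R -> R) (d : X -> X -> R)
  (Htheta : B_action theta) (Hd : theta_metric theta d) :
  forall (a : X) (k : R), k > 0 ->
    exists r, r > 0 /\
      forall b c : X, d a b >= k -> d a c + d c b >= r.
Proof.
  intros a k Hk.
  destruct (B_action_small_box theta k Htheta Hk) as [u [v [Hu [Hv Huv]]]].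
  exists (Rmin u v); split; [apply Rmin_glb_lt; lra |].
  intros b c Hab.
  destruct (Rle_lt_dec (Rmin u v) (d a c + d c b)) as [Hr | Hr]; [lra | exfalso].
  pose proof (Rmin_l u v); pose proof (Rmin_r u v).
  pose proof (proj1 Hd a c); pose proof (proj1 Hd c b).
  assert (Hshort : d a b < k).
  { apply (theta_metric_short_path X theta d u v k a b c Htheta Hd); lra. }
  lra.
Qed.
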